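(* Let $t,m,r$ be positive integers with $r\geq 2$. If $r(3r-1)$ is not equal to $(mk^{2}-(m-2)k)t$ for any positive integer $k$, then there exists an integer $n$ with $2r-1\le n\le \frac{r(3r-1)}{2}$ such that $p_{mt,t}(n)$ is odd.
   Context: A partition $\lambda$ of a non-negative integer $n$ is a non-increasing sequence of positive integers (its parts) summing to $n$. For positive integers $A$ and $a$, $\mathrm{mex}_{A,a}(\lambda)$ denotes the smallest positive integer congruent to $a$ modulo $A$ that is not a part of $\lambda$. Then $p_{A,a}(n)$ denotes the number of partitions $\lambda$ of $n$ satisfying $\mathrm{mex}_{A,a}(\lambda)\equiv a \pmod{2A}$. *)

From mathcomp Require Import all_boot all_order all_algebra.
Set Implicit Arguments. Unset Strict Implicit. Unset Printing Implicit Defensive.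

Definition is_partition (n : nat) (s : seq nat) : bool :=
  [&& sorted geq s, all (fun x => 0 < x) s & sumn s == n].

(* A finite list of candidate sequences containing every partition of n:
   all sequences of length <= n with entries in {0,...,n}
   (a partition of n has at most n parts, each at most n). *)
Definition cands (n : nat) : seq (seq nat) :=
  flatten [seq [seq map (@nat_of_ord _) (tval t) | t : k.-tuple 'I_n.+1]
          | k <- iota 0 n.+1].

(* mex_{A,a}(s): the smallest positive integer congruent to a mod A that is not
   a part of s.  Among a, a+A, ..., a+A*(size s).+1 (all <= the search bound)
   at least one is not a part of s, so the first element of this increasing
   filtered list is exactly the mex (for A > 0). *)
Definition mex (A a : nat) (s : seq nat) : nat :=
  head 0 [seq j <- iota 1 (a + A * (size s).+1) |
            (j == a %[mod A]) && (j \notin s)].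

Definition p (A a n : nat) : nat :=
  size (undup [seq s <- cands n |
                 is_partition n s && (mex A a s == a %[mod A.*2])]).

From mathcomp Require Import all_boot all_order all_algebra.
From mathcomp Require Import zify.
Import GRing.Theory Num.Theory.
Set Implicit Arguments. Unset Strict Implicit. Unset Printing Implicit Defensive.

(* Let e_i = a + (a + A) + ... + (a + (i - 1) A).  For 0 < a <= A the mex of a
   partition s is a + A k, where k is the number of initial terms of the
   progression a, a + A, ... occurring in s, and mex = a (mod 2A) iff k is even.
   Since k + 1 counts the i <= k, and the partitions of n containing the first
   i terms correspond to the partitions of n - e_i, this gives
     p_{A,a}(n) = sum_i p(n - e_i)   (mod 2).
   Euler's pentagonal theorem mod 2, sum_j p(M - j(3j+1)/2) = 0 for M > 0
   (proved with the Bressoud-Zeilberger involution), then shows that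
   sum_j p_{A,a}(N - j(3j+1)/2) is even whenever N is none of the e_i.
   For A = mt and a = t we have 2 e_k = (m k^2 - (m-2) k) t, so this applies to
   N = r(3r-1)/2, the pentagonal number of index -r.  In that sum the term of
   index -r is p_{A,a}(0) = 1, and every other pentagonal number up to N is at
   most N - (2r-1), so some p_{A,a}(n) with 2r-1 <= n <= N must be odd. *)

(** * Partitions *)

Definition partitions (n : nat) : seq (seq nat) :=
  undup [seq s <- cands n | is_partition n s].

Lemma partitions_uniq n : uniq (partitions n).
Proof. exact: undup_uniq. Qed.

Lemma size_le_sumn s : all (fun x => 0 < x) s -> size s <= sumn s.
Proof. by elim: s => //= x s IH /andP[x_gt0 /IH]; lia. Qed.

Lemma mem_le_sumn s x : x \in s -> x <= sumn s.
Proof. by elim: s => //= y s IH; rewrite inE => /predU1P[->|/IH]; lia. Qed.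

Lemma cands_partition n s : is_partition n s -> s \in cands n.
Proof.
case/and3P=> _ s_pos /eqP sum_s.
have size_s : size s <= n by rewrite -sum_s size_le_sumn.
have s_le x : x \in s -> x < n.+1 by move/mem_le_sumn; rewrite sum_s.
pose s' := [seq inord x : 'I_n.+1 | x <- s].
have s'K : map val s' = s.
  by rewrite -map_comp map_id_in // => x /s_le x_le /=; rewrite inordK.
apply/flatten_mapP; exists (size s); first by rewrite mem_iota.
have -> : size s = size s' by rewrite size_map.
apply/mapP; exists (in_tuple s'); first by rewrite mem_enum.
by rewrite /= s'K.
Qed.

Lemma mem_partitions n s : (s \in partitions n) = is_partition n s.
Proof. by rewrite mem_undup mem_filter andb_idr //; apply: cands_partition. Qed.

Lemma partitions0 : perm_eq (partitions 0) [:: [::]].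
Proof.
apply: uniq_perm => // [|s]; first exact: partitions_uniq.
rewrite mem_partitions inE; apply/idP/eqP => [|-> //].
by case/and3P=> _ /size_le_sumn + /eqP sum0; rewrite sum0 leqn0 => /nilP.
Qed.

Lemma p_count A a n :
  p A a n = count (fun s => mex A a s == a %[mod A.*2]) (partitions n).
Proof.
rewrite /p /partitions -size_filter filter_undup -filter_predI.
by congr (size (undup _)); apply: eq_filter => s /=; rewrite andbC.
Qed.

Lemma geq_trans : transitive geq.
Proof. by move=> y x z /= le_yx le_zy; apply: leq_trans le_zy le_yx. Qed.

Lemma geq_total : total geq.
Proof. by move=> x y; apply: leq_total. Qed.

Lemma geq_anti : antisymmetric geq.
Proof. by move=> x y /andP[? ?]; apply/anti_leq/andP. Qed.

Lemma is_partition_sort n s :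
  is_partition n (sort geq s) = all (fun x => 0 < x) s && (sumn s == n).
Proof.
have perm_s := permEl (perm_sort geq s).
by rewrite /is_partition (sort_sorted geq_total) (perm_all _ perm_s) (perm_sumn perm_s).
Qed.

Lemma perm_cat_subset (E s : seq nat) :
  uniq E -> {subset E <= s} -> exists r, perm_eq s (E ++ r).
Proof.
elim: E s => [|x E IH] s /=; first by exists s.
case/andP=> xNE uniqE sub_xE_s.
have s_x : x \in s by apply: sub_xE_s; apply: mem_head.
have [r perm_r] : exists r, perm_eq (rem x s) (E ++ r).
  apply: IH => // y E_y; have yNx : y != x by apply: contraNneq xNE => <-.
  have := sub_xE_s y; rewrite inE E_y orbT (perm_mem (perm_to_rem s_x)) inE.
  by rewrite (negbTE yNx) => /(_ isT).
by exists r; rewrite (permPl (perm_to_rem s_x)) /= perm_cons.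
Qed.

Lemma count_partitions_superset (E : seq nat) n :
  uniq E -> all (fun x => 0 < x) E ->
  count (fun s => all (fun x => x \in s) E) (partitions n) =
    if sumn E <= n then size (partitions (n - sumn E)) else 0.
Proof.
move=> uniqE E_pos.
have split_E s : all (fun x => x \in s) E -> exists r, perm_eq s (E ++ r).
  by move/allP; apply: perm_cat_subset.
case: leqP => [le_En | lt_nE]; last first.
  apply/eqP; rewrite -leqn0 leqNgt -has_count; apply/hasP => -[s].
  rewrite mem_partitions => /and3P[_ _ /eqP sum_s] /split_E[r /perm_sumn].
  by rewrite sumn_cat; lia.
have sortP := perm_sortP geq_total geq_trans geq_anti.
pose insE l := sort geq (E ++ l).
rewrite -size_filter -(size_map insE); apply/perm_size/uniq_perm.
- exact/filter_uniq/partitions_uniq.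
- rewrite map_inj_in_uniq ?partitions_uniq // => l1 l2.
  rewrite !mem_partitions => /and3P[sorted_l1 _ _] /and3P[sorted_l2 _ _].
  move/sortP; rewrite perm_cat2l.
  exact: sorted_eq geq_trans geq_anti _ _ sorted_l1 sorted_l2.
move=> s; rewrite mem_filter mem_partitions.
apply/andP/mapP => [[sub_Es part_s] | [l]].
  have [r perm_s] := split_E s sub_Es.
  case/and3P: part_s => sorted_s s_pos /eqP sum_s.
  exists (sort geq r).
    rewrite mem_partitions is_partition_sort.
    move: s_pos sum_s; rewrite (perm_all _ perm_s) (perm_sumn perm_s) all_cat sumn_cat.
    by case/andP=> _ -> <-; apply/eqP; lia.
  rewrite /insE -(sorted_sort geq_trans sorted_s); apply/sortP.
  by rewrite (permPl perm_s) perm_cat2l perm_sym (permEl (perm_sort _ _)).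
rewrite mem_partitions => part_l ->; split.
  by apply/allP => x E_x; rewrite /insE mem_sort mem_cat E_x.
case/and3P: part_l => _ l_pos /eqP sum_l.
by rewrite is_partition_sort all_cat E_pos l_pos sumn_cat sum_l; apply/eqP; lia.
Qed.

(** * The mex and the arithmetic progression *)

Definition aprog (A a i : nat) : seq nat := [seq a + A * j | j <- iota 0 i].

Definition aprog_sum (A a i : nat) : nat := sumn (aprog A a i).

Lemma aprog_sum_double A a i : (aprog_sum A a i).*2 = a * i.*2 + A * i * i.-1.
Proof.
rewrite /aprog_sum /aprog; elim: i => [|i IH]; first by rewrite /=; lia.
rewrite -[i.+1]addn1 iotaD map_cat sumn_cat /= doubleD IH; case: i {IH} => [|i]; nia.
Qed.

Lemma aprog_sum_mul_double m t k :
  ((aprog_sum (m * t) t k).*2%:Z = (m%:Z * k%:Z ^+ 2 - (m%:Z - 2) * k%:Z) * t%:Z)%R.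
Proof. by rewrite aprog_sum_double expr2; case: k => [|k]; nia. Qed.

Section MexIndex.

Variables (A a : nat).
Hypothesis A_gt0 : 0 < A.

Definition mex_index (s : seq nat) : nat :=
  find (fun i => a + A * i \notin s) (iota 0 (size s).+1).

Lemma aprog_uniq i : uniq (aprog A a i).
Proof.
rewrite map_inj_uniq ?iota_uniq // => k1 k2 /addnI /eqP.
by rewrite eqn_pmul2l // => /eqP.
Qed.

Lemma mex_index_le s : mex_index s <= size s.
Proof.
suff: has (fun i => a + A * i \notin s) (iota 0 (size s).+1).
  by rewrite has_find size_iota.
apply/negPn/negP => /hasPn all_in.
have: size (aprog A a (size s).+1) <= size s.
  apply: uniq_leq_size (aprog_uniq _) _ => _ /mapP[i /all_in /negPn ? ->] //.
by rewrite size_map size_iota ltnn.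
Qed.

Lemma mex_index_notin s : a + A * mex_index s \notin s.
Proof.
have: has (fun i => a + A * i \notin s) (iota 0 (size s).+1).
  by rewrite has_find size_iota ltnS mex_index_le.
by move/(nth_find 0); rewrite -/(mex_index s) nth_iota ?add0n ?ltnS ?mex_index_le.
Qed.

Lemma mex_indexP s i :
  (i <= mex_index s) = all (fun x => x \in s) (aprog A a i).
Proof.
rewrite all_map; apply/idP/allP => [le_i_mi j | all_in].
  rewrite mem_iota add0n => /andP[_ lt_ji] /=.
  have lt_j_mi := leq_trans lt_ji le_i_mi.
  have lt_j_size : j < (size s).+1.
    by rewrite ltnS ltnW // (leq_trans lt_j_mi) ?mex_index_le.
  by move: (before_find 0 lt_j_mi); rewrite nth_iota // add0n => /negbFE.
rewrite leqNgt; apply/negP => lt_mi; move: (all_in (mex_index s)).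
by rewrite mem_iota lt_mi /= (negbTE (mex_index_notin s)) => /(_ isT).
Qed.

End MexIndex.

Lemma modn_progression A a y :
  0 < a <= A -> 0 < y -> y = a %[mod A] -> exists q, y = a + A * q.
Proof.
case/andP=> a_gt0 le_aA y_gt0 eq_ya.
have le_ay : a <= y.
  rewrite leqNgt; apply/negP => lt_ya; move: eq_ya.
  rewrite (modn_small (leq_trans lt_ya le_aA)).
  have [lt_aA | eq_aA] := ltnP a A; first by rewrite modn_small //; lia.
  by rewrite (_ : a = A) ?modnn; lia.
move/eqP: eq_ya; rewrite eqn_mod_dvd // => /divnK sub_eq.
by exists ((y - a) %/ A); rewrite mulnC sub_eq; lia.
Qed.

Lemma mexE A a s : 0 < a <= A -> mex A a s = a + A * mex_index A a s.
Proof.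
move=> a_range; have A_gt0 : 0 < A by case/andP: a_range; lia.
set mi := mex_index A a s; set x0 := a + A * mi.
have le_mi_size : A * mi <= A * (size s).+1.
  by rewrite leq_mul2l ltnW ?orbT // ltnS mex_index_le.
have x0_gt0 : 0 < x0 by case/andP: a_range; lia.
rewrite /mex; have [k ->] : exists k, a + A * (size s).+1 = (x0 - 1) + k.+1.
  by exists (a + A * (size s).+1 - x0); lia.
rewrite iotaD filter_cat (_ : 1 + (x0 - 1) = x0) /=; last by lia.
rewrite (eq_in_filter (a2 := pred0)) ?filter_pred0 /=.
  by rewrite /x0 addnC mulnC modnMDl eqxx addnC mulnC mex_index_notin.
move=> y; rewrite mem_iota => /andP[y_gt0 lt_y_x0] /=.
apply/negbTE/nandP; case: (boolP (y == a %[mod A])) => [/eqP eq_ya|]; [right | by left].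
have [q def_y] := modn_progression a_range y_gt0 eq_ya.
have lt_q_mi : q < mi by rewrite -(ltn_pmul2l A_gt0); lia.
move: lt_q_mi; rewrite negbK def_y /mi mex_indexP // => /allP; apply.
by apply/mapP; exists q => //; rewrite mem_iota; lia.
Qed.

Lemma mex_modn_double A a s :
  0 < a <= A -> (mex A a s == a %[mod A.*2]) = ~~ odd (mex_index A a s).
Proof.
move=> a_range; have A_gt0 : 0 < A by case/andP: a_range; lia.
rewrite mexE //; set mi := mex_index A a s.
rewrite -{2}[a]addn0 eqn_modDl mod0n -muln2 -/(dvdn _ _).
by rewrite dvdn_pmul2l // dvdn2.
Qed.

Lemma p_0 A a : 0 < a <= A -> p A a 0 = 1.
Proof.
by move=> a_range; rewrite p_count; move/permP: partitions0 => -> /=; rewrite mex_modn_double.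
Qed.

Lemma odd_count_even T (f : T -> nat) (s : seq T) :
  odd (count (fun x => ~~ odd (f x)) s) = odd (\sum_(x <- s) (f x).+1).
Proof.
elim: s => [|x s IH]; first by rewrite big_nil.
by rewrite big_cons /= !oddD IH oddb addNb.
Qed.

Lemma count_iota_leq k n : k <= n -> count (fun i => i <= k) (iota 0 n.+1) = k.+1.
Proof. by move=> le_kn; rewrite -size_filter (filter_iota_leq 0 (j := k)) ?size_iota. Qed.

Lemma sum_count_exchange (T U : Type) (P : T -> U -> bool) (r : seq T) (s : seq U) :
  \sum_(x <- r) count (P x) s = \sum_(y <- s) count (P^~ y) r.
Proof.
under eq_bigr do rewrite -sum1_count big_mkcond.
by rewrite exchange_big; apply: eq_bigr => y _; rewrite -sum1_count [RHS]big_mkcond.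
Qed.

Lemma odd_p A a n K : 0 < a <= A -> n <= K ->
  odd (p A a n) =
    odd (\sum_(i <- iota 0 K.+1 | aprog_sum A a i <= n)
           size (partitions (n - aprog_sum A a i))).
Proof.
move=> a_range le_nK; have A_gt0 : 0 < A by case/andP: a_range; lia.
have count_mex_index i : count (fun s => i <= mex_index A a s) (partitions n) =
    if aprog_sum A a i <= n then size (partitions (n - aprog_sum A a i)) else 0.
  rewrite -count_partitions_superset ?aprog_uniq //.
    by apply: eq_count => s; rewrite mex_indexP.
  by apply/allP => _ /mapP[j _ ->]; case/andP: a_range; lia.
rewrite p_count; under eq_count => s do rewrite mex_modn_double //.
rewrite odd_count_even; congr odd.
rewrite [RHS]big_mkcond; under [RHS]eq_bigr => i _ do rewrite -count_mex_index.
rewrite -sum_count_exchange; apply: eq_big_seq => s.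
rewrite mem_partitions => /and3P[_ s_pos /eqP sum_s].
rewrite count_iota_leq // (leq_trans (mex_index_le _ _ _)) // (leq_trans _ le_nK) //.
by rewrite -sum_s size_le_sumn.
Qed.

(** * Pentagonal numbers *)

Definition pent (j : int) : nat := (absz (j * (3 * j + 1))%R)./2.

Lemma pentE j : ((pent j)%:Z * 2 = j * (3 * j + 1))%R.
Proof.
pose x := absz (j * (3 * j + 1))%R.
have [even_x x_def] : ~~ odd x /\ (x%:Z = j * (3 * j + 1))%R.
  rewrite /x {x}; case: j => k.
    have -> : (Posz k * (3 * Posz k + 1) = (k * (3 * k + 1))%:Z)%R by nia.
    by rewrite absz_nat oddM oddD oddM /=; case: (odd k).
  have -> : (Negz k * (3 * Negz k + 1) = (k.+1 * (3 * k + 2))%:Z)%R by rewrite NegzE; nia.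
  by rewrite absz_nat oddM oddD oddM /=; case: (odd k).
have := odd_double_half x.
by rewrite /pent (negbTE even_x) add0n -muln2; lia.
Qed.

Lemma pent_neg_double r : (pent (- r%:Z)).*2 = r * (3 * r - 1).
Proof. by have := pentE (- r%:Z)%R; case: r => [|r]; nia. Qed.

Lemma abs_le_pent j : absz j <= pent j.
Proof. by have := pentE j; case: (ler0P j) => _; nia. Qed.

(* The largest pentagonal number below pent (- r) is pent (r - 1) = pent (- r) - (2r - 1). *)
Lemma pent_gap (r : nat) (j : int) :
  j != (- r%:Z)%R -> pent j <= pent (- r%:Z) -> pent j + (2 * r - 1) <= pent (- r%:Z).
Proof.
move=> jNr le_pent; have abs_j := abs_le_pent j.
have pent_j := pentE j; have pent_r := pentE (- r%:Z)%R.
have lt_jr : (j < r%:Z)%R.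
  case: (boolP (j < r%:Z)%R) => // ge_jr.
  have : (r%:Z * (3 * r%:Z + 1) <= j * (3 * j + 1))%R by nia.
  nia.
have gt_jr : (- r%:Z < j)%R.
  case: (boolP (- r%:Z < j)%R) => // le_jr.
  have le_jr1 : (j <= - r%:Z - 1)%R by move: jNr le_jr => /eqP; lia.
  have : ((r%:Z + 1) * (3 * r%:Z + 2) <= j * (3 * j + 1))%R by nia.
  lia.
have : (j * (3 * j + 1) <= (r%:Z - 1) * (3 * r%:Z - 2))%R by nia.
lia.
Qed.

(** * The Bressoud-Zeilberger involution *)

Lemma head_max (l : seq nat) : sorted geq l -> all (fun y => y <= head 0 l) l.
Proof.
case: l => //= x l sorted_l; rewrite leqnn /=.
by apply/allP => y /(allP (order_path_min geq_trans sorted_l)).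
Qed.

Lemma sumn_head_behead (l : seq nat) : sumn l = head 0 l + sumn (behead l).
Proof. by case: l. Qed.

Lemma sumn_filter_pos (l : seq nat) : sumn [seq y <- l | 0 < y] = sumn l.
Proof. by elim: l => //= -[|y] l IH /=; rewrite IH. Qed.

Lemma sumn_predn (l : seq nat) :
  all (fun y => 0 < y) l -> sumn (map predn l) + size l = sumn l.
Proof. by elim: l => //= y l IH /andP[y_gt0 /IH]; lia. Qed.

Lemma sumn_succn (l : seq nat) : sumn (map succn l) = sumn l + size l.
Proof. by elim: l => //= y l ->; lia. Qed.

Lemma pos_head_behead (l : seq nat) :
  all (fun y => 0 < y) l -> [seq y <- head 0 l :: behead l | 0 < y] = l.
Proof. by case: l => //= x l /andP[-> l_pos]; rewrite (all_filterP l_pos). Qed.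

Lemma pos_predn_ones (l : seq nat) :
  all (fun y => y <= 1) l -> [seq y <- map predn l | 0 < y] = [::].
Proof. by elim: l => //= y l IH /andP[y_le1 /IH ->]; case: y y_le1 => [|[]]. Qed.

Lemma predn_partsK (l : seq nat) (F := [seq y <- map predn l | 0 < y]) :
  sorted geq l -> all (fun y => 0 < y) l ->
  map succn F ++ nseq (size l - size F) 1 = l.
Proof.
rewrite {}/F; elim: l => //= x l IH sorted_xl /andP[x_gt0 l_pos].
have sorted_l := path_sorted sorted_xl.
case: x x_gt0 sorted_xl => [//|[|x]] _ sorted_xl /=; last by rewrite subSS IH.
have l_ones : all (fun y => y <= 1) l.
  by apply/allP=> y /(allP (order_path_min geq_trans sorted_xl)).
rewrite pos_predn_ones //=; congr (_ :: _); apply/esym/all_pred1P/allP => y y_l.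
by have := allP l_pos y y_l; have := allP l_ones y y_l; rewrite /=; lia.
Qed.

Lemma sorted_succn_ones (l : seq nat) c :
  sorted geq l -> sorted geq (map succn l ++ nseq c 1).
Proof.
move=> sorted_l; have sorted_ones : sorted geq (nseq c 1).
  by case: c => //; elim=> //= c ->; rewrite leqnn.
rewrite (sorted_pairwise geq_trans) pairwise_cat -!(sorted_pairwise geq_trans).
rewrite sorted_ones (@homo_sorted _ _ succn geq geq _ l) // !andbT.
by apply/allrelP => _ y /mapP[x _ ->]; rewrite mem_nseq => /andP[_ /eqP ->].
Qed.

(* The Bressoud-Zeilberger involution on the pairs (j, l) with l a partition of
   M - pent j.  If l_1 <= #l + 3j, remove the first column of l and add a part
   #l + 3j - 1, moving to j - 1; otherwise remove the largest part l_1, add 1 to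
   the remaining #l - 1 parts and append l_1 - 3j - #l - 1 parts equal to 1,
   moving to j + 1.  Using [size (behead l)] for #l - 1 makes the recipe also
   correct for the empty partition; [0%N] keeps the default of [head] a nat
   literal inside the %R scope, where [lia] would not recognise it. *)
Definition bz_shrink (j : int) (l : seq nat) : seq nat :=
  [seq y <- absz ((size l)%:Z + 3 * j - 1)%R :: map predn l | 0 < y].

Definition bz_grow (j : int) (l : seq nat) : seq nat :=
  map succn (behead l) ++
    nseq (absz ((head 0%N l)%:Z - 3 * j - (size (behead l))%:Z - 2)%R) 1.

Definition bz (x : int * seq nat) : int * seq nat :=
  let: (j, l) := x in
  if ((head 0%N l)%:Z <= (size l)%:Z + 3 * j)%R then ((j - 1)%R, bz_shrink j l)
  else ((j + 1)%R, bz_grow j l).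

Definition pent_pair (M : nat) (x : int * seq nat) : bool :=
  let: (j, l) := x in
  [&& sorted geq l, all (fun y => 0 < y) l & pent j + sumn l == M].

Section Shrink.

Variables (j : int) (l : seq nat).
Hypotheses (sorted_l : sorted geq l) (l_pos : all (fun y => 0 < y) l).
Hypotheses (head_le : ((head 0%N l)%:Z <= (size l)%:Z + 3 * j)%R)
           (size_ge : (1 <= (size l)%:Z + 3 * j)%R).

Let z := absz ((size l)%:Z + 3 * j - 1)%R.
Let F := [seq y <- map predn l | 0 < y].

Let zE : (z%:Z = (size l)%:Z + 3 * j - 1)%R.
Proof. by rewrite /z; lia. Qed.

Let F_nil : z = 0 -> F = [::].
Proof.
move=> z0; apply: pos_predn_ones; apply: sub_all (head_max sorted_l) => y /= y_le.
by move: zE; rewrite z0; lia.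
Qed.

Let bz_shrink_head : head 0 (bz_shrink j l) = z.
Proof. by rewrite /bz_shrink -/z /=; case: (posnP z) => [z0 | //]; rewrite -/F F_nil. Qed.

Let bz_shrink_behead : behead (bz_shrink j l) = F.
Proof. by rewrite /bz_shrink -/z /=; case: (posnP z) => [z0 | //]; rewrite -/F F_nil. Qed.

Lemma bz_shrinkK : bz ((j - 1)%R, bz_shrink j l) = (j, l).
Proof.
have size_shrink : size (bz_shrink j l) <= (size l).+1.
  by rewrite /bz_shrink size_filter (leq_trans (count_size _ _)) //= size_map.
have size_F : size F <= size l by rewrite size_filter -(size_map predn l) count_size.
rewrite /bz bz_shrink_head ifF; last by apply/negbTE; lia.
rewrite subrK /bz_grow bz_shrink_head bz_shrink_behead.
by rewrite (_ : absz _ = size l - size F) ?predn_partsK //; lia.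
Qed.

Lemma pent_pair_shrink M : pent_pair M (j, l) -> pent_pair M ((j - 1)%R, bz_shrink j l).
Proof.
case/and3P=> _ _ /eqP sum_l; apply/and3P; split.
- rewrite /bz_shrink (sorted_filter geq_trans) //= path_sortedE; last exact: geq_trans.
  rewrite all_map (@homo_sorted _ _ predn geq geq _ l) //= ?andbT => [|x y /=]; last lia.
  by apply: sub_all (head_max sorted_l) => y /= y_le; move: zE; lia.
- exact: filter_all.
- have := pentE j; have := pentE (j - 1); have := sumn_predn l_pos.
  by rewrite /bz_shrink sumn_filter_pos /= -/z; move: zE; lia.
Qed.

End Shrink.

Section Grow.

Variables (j : int) (l : seq nat).
Hypotheses (sorted_l : sorted geq l) (l_pos : all (fun y => 0 < y) l).
Hypothesis head_gt : ((size l)%:Z + 3 * j < (head 0%N l)%:Z)%R.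

Let c := absz ((head 0%N l)%:Z - 3 * j - (size (behead l))%:Z - 2)%R.

Let cE : (c%:Z = (head 0%N l)%:Z - 3 * j - (size (behead l))%:Z - 2)%R.
Proof. by rewrite /c; move: head_gt; case: (l) => [|h l'] /=; lia. Qed.

Let sorted_behead : sorted geq (behead l).
Proof. by case: (l) sorted_l => //= x l' /path_sorted. Qed.

Lemma bz_growK : bz ((j + 1)%R, bz_grow j l) = (j, l).
Proof.
set G := bz_grow j l.
have size_G : size G = size (behead l) + c by rewrite size_cat size_map size_nseq.
have G_le : all (fun y => y <= (head 0 l).+1) G.
  rewrite all_cat all_map all_nseq orbT andbT.
  by apply/allP => y /mem_behead y_l /=; rewrite ltnS (allP (head_max sorted_l)).
have head_G : head 0 G <= (head 0 l).+1 by case: (G) G_le => //= y G' /andP[].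
rewrite /bz ifT; last by move: cE; lia.
rewrite addrK /bz_shrink (_ : absz _ = head 0 l); last by move: cE; lia.
rewrite map_cat (mapK succnK) map_nseq -cat_cons filter_cat pos_head_behead //.
by rewrite filter_nseq /= cats0.
Qed.

Lemma pent_pair_grow M : pent_pair M (j, l) -> pent_pair M ((j + 1)%R, bz_grow j l).
Proof.
case/and3P=> _ _ /eqP sum_l; apply/and3P; split.
- exact: sorted_succn_ones sorted_behead.
- by rewrite all_cat all_nseq orbT andbT; apply/allP => _ /mapP[y _ ->].
- have := pentE j; have := pentE (j + 1); move: sum_l cE.
  by rewrite sumn_cat sumn_nseq sumn_succn (sumn_head_behead l); lia.
Qed.

End Grow.

(* Only (0, [::]), where M = 0, escapes this bound; there [bz_shrink] would take
   the absolute value of -1. *)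
Lemma pent_pair_shrink_size M j l :
  0 < M -> pent_pair M (j, l) -> ((head 0%N l)%:Z <= (size l)%:Z + 3 * j)%R ->
  (1 <= (size l)%:Z + 3 * j)%R.
Proof.
move=> M_gt0 /and3P[_ l_pos /eqP sum_l]; case: l l_pos sum_l => [|h l'] /=.
  by have := pentE j; nia.
by case/andP; lia.
Qed.

Lemma pent_pair_bz M x : 0 < M -> pent_pair M x -> pent_pair M (bz x).
Proof.
case: x => j l M_gt0 pp; have /and3P[sorted_l l_pos _] := pp.
rewrite /bz; case: ifP => [head_le | /negbT head_gt].
  by apply: pent_pair_shrink => //; apply: pent_pair_shrink_size pp head_le.
by apply: pent_pair_grow => //; lia.
Qed.

Lemma bzK M x : 0 < M -> pent_pair M x -> bz (bz x) = x.
Proof.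
case: x => j l M_gt0 pp; have /and3P[sorted_l l_pos _] := pp.
rewrite {2}/bz; case: ifP => [head_le | /negbT head_gt].
  by apply: bz_shrinkK => //; apply: pent_pair_shrink_size pp head_le.
by apply: bz_growK => //; lia.
Qed.

Lemma bz_neq x : bz x != x.
Proof. by case: x => j l; rewrite /bz; case: ifP => _; apply/negP => /eqP [] /eqP; lia. Qed.

Lemma fixpointfree_involution_even (T : eqType) (f : T -> T) (s : seq T) :
  uniq s -> {in s, forall x, f x \in s} -> {in s, forall x, f (f x) = x} ->
  {in s, forall x, f x != x} -> ~~ odd (size s).
Proof.
have [n] := ubnP (size s); elim: n s => // n IH [|x s] //= size_s.
case/andP=> xNs uniq_s f_in f_inv f_neq.
have fxx : f (f x) = x := f_inv x (mem_head _ _).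
have s_fx : f x \in s.
  by have := f_in x (mem_head _ _); rewrite inE (negbTE (f_neq x (mem_head _ _))).
have mem_rem := mem_rem_uniq (f x) uniq_s.
suff: ~~ odd (size (rem (f x) s)).
  by rewrite size_rem //; case: (s) s_fx => //= y s' _; rewrite negbK.
have in_rem y : y \in rem (f x) s -> y \in x :: s.
  by rewrite mem_rem => /andP[_ y_s]; rewrite inE y_s orbT.
apply: IH.
- by rewrite size_rem //; move: size_s => /=; lia.
- exact: rem_uniq.
- move=> y y_rem; have y_xs := in_rem y y_rem; move: y_rem.
  rewrite !mem_rem !inE => /andP[yNfx y_s].
  have yNx : y != x by apply: contraNneq xNs => <-.
  have := f_in y y_xs; rewrite inE => /predU1P[fy_x | -> ]; rewrite ?andbT.
    by move: yNfx; rewrite -fy_x f_inv ?eqxx.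
  by apply: contra_neq yNx => fy_fx; rewrite -(f_inv y y_xs) fy_fx fxx.
- by move=> y /in_rem; apply: f_inv.
- by move=> y /in_rem; apply: f_neq.
Qed.

Definition srange (B : nat) : seq int :=
  [seq (k%:Z - B%:Z)%R | k <- iota 0 (2 * B).+1].

Lemma mem_srange B j : (j \in srange B) = (absz j <= B).
Proof.
apply/mapP/idP => [[k] | le_jB]; first by rewrite mem_iota => k_lt ->; lia.
by exists (absz (j + B%:Z)%R); rewrite ?mem_iota; lia.
Qed.

Lemma srange_uniq B : uniq (srange B).
Proof. by rewrite map_inj_uniq ?iota_uniq // => k1 k2 /=; lia. Qed.

Definition pent_pairs (B M : nat) : seq (int * seq nat) :=
  [seq (j, l) | j <- [seq j <- srange B | pent j <= M], l <- partitions (M - pent j)].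

Lemma mem_pent_pairs B M x : M <= B -> (x \in pent_pairs B M) = pent_pair M x.
Proof.
case: x => j l le_MB; apply/allpairsPdep/idP => [[j' [l' [+ + [-> ->]]]] | pp].
  rewrite mem_filter mem_partitions => /andP[le_pent _].
  by case/and3P=> sorted_l l_pos /eqP sum_l; apply/and3P; split=> //; apply/eqP; lia.
have /and3P[sorted_l l_pos /eqP sum_l] := pp.
exists j, l; rewrite mem_filter mem_srange mem_partitions; split=> //.
  by have := abs_le_pent j; lia.
by rewrite /is_partition sorted_l l_pos; apply/eqP; lia.
Qed.

Lemma pent_pairs_uniq B M : uniq (pent_pairs B M).
Proof.
apply: allpairs_uniq_dep => [|j _|]; first exact/filter_uniq/srange_uniq.
  exact: partitions_uniq.
by move=> [j1 l1] [j2 l2] _ _ /= [-> ->].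
Qed.

Lemma size_pent_pairs B M :
  size (pent_pairs B M) =
    \sum_(j <- srange B | pent j <= M) size (partitions (M - pent j)).
Proof. by rewrite size_allpairs_dep sumnE big_map big_filter. Qed.

Lemma pentagonal_sum_even B M : 0 < M <= B ->
  ~~ odd (\sum_(j <- srange B | pent j <= M) size (partitions (M - pent j))).
Proof.
case/andP=> M_gt0 le_MB; rewrite -size_pent_pairs.
apply: (fixpointfree_involution_even (f := bz)) => [|x|x|x _]; rewrite ?mem_pent_pairs //.
- exact: pent_pairs_uniq.
- exact: pent_pair_bz.
- exact: bzK.
- exact: bz_neq.
Qed.

(** * The pentagonal convolution of p_{A,a} *)

Lemma odd_sum_congr (I : Type) (r : seq I) (P : pred I) (F G : I -> nat) :
  (forall i, P i -> odd (F i) = odd (G i)) ->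
  odd (\sum_(i <- r | P i) F i) = odd (\sum_(i <- r | P i) G i).
Proof.
move=> oddFG; elim: r => [|i r IH]; first by rewrite !big_nil.
by rewrite !big_cons; case: ifP => // Pi; rewrite !oddD IH oddFG.
Qed.

Lemma even_sum (I : Type) (r : seq I) (P : pred I) (F : I -> nat) :
  (forall i, P i -> ~~ odd (F i)) -> ~~ odd (\sum_(i <- r | P i) F i).
Proof.
move=> evenF; apply: (big_ind (fun x => ~~ odd x)) => // x y even_x even_y.
by rewrite oddD (negbTE even_x) (negbTE even_y).
Qed.

Lemma pentagonal_conv_p_even A a (N : nat) :
  0 < a <= A -> (forall i, aprog_sum A a i != N) ->
  ~~ odd (\sum_(j <- srange N | pent j <= N) p A a (N - pent j)).
Proof.
move=> a_range sum_neq.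
rewrite (@odd_sum_congr _ _ _ _ (fun j =>
    \sum_(i <- iota 0 N.+1 | aprog_sum A a i <= N - pent j)
       size (partitions (N - pent j - aprog_sum A a i)))); last first.
  by move=> j _; rewrite (odd_p a_range (leq_subr _ _)).
rewrite (exchange_big_dep (fun i => aprog_sum A a i <= N)) /=; last by move=> j i; lia.
apply: even_sum => i le_sum_N.
rewrite (eq_bigl (fun j => pent j <= N - aprog_sum A a i)) => [|j]; last first.
  by apply/andP/idP; lia.
under eq_bigr => j _ do rewrite subnAC.
by apply: pentagonal_sum_even; have := sum_neq i; lia.
Qed.

Theorem lemma2p3 (t m r : nat) (ht : 0 < t) (hm : 0 < m) (hr : 2 <= r) :
  (forall k : nat, 0 < k ->
     ((r * (3 * r - 1))%:Z !=
      ((m%:Z * k%:Z ^+ 2 - (m%:Z - 2) * k%:Z) * t%:Z))%R) ->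
  exists n : nat,
    (2 * r - 1 <= n <= r * (3 * r - 1) %/ 2) && odd (p (m * t) t n).
Proof.
move=> not_sum; set N := r * (3 * r - 1) %/ 2.
have pent_r : pent (- r%:Z) = N by rewrite /N -pent_neg_double -muln2 mulnK.
have le_rN : 2 * r - 1 <= N by have := pent_neg_double r; rewrite pent_r; nia.
have t_range : 0 < t <= m * t by rewrite ht leq_pmull.
have sum_neq i : aprog_sum (m * t) t i != N.
  case: i => [|k]; first by rewrite /aprog_sum /=; lia.
  apply: contra (not_sum k.+1 isT) => /eqP sum_eq.
  by rewrite -aprog_sum_mul_double sum_eq -pent_r pent_neg_double.
suff /hasP[n] : has (fun n => (2 * r - 1 <= n <= N) && odd (p (m * t) t n)) (iota 0 N.+1).
  by exists n.
apply/negPn/negP => /hasPn no_odd; move: (pentagonal_conv_p_even t_range sum_neq).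
have r_in : (- r%:Z)%R \in srange N by rewrite mem_srange abszN absz_nat; lia.
rewrite big_mkcond (bigD1_seq _ r_in (srange_uniq N)) /= pent_r leqnn subnn p_0 //.
rewrite oddD /= negbK; apply/negP; apply: even_sum => j jNr; case: ifP => // le_pent.
have := pent_gap jNr; rewrite pent_r => /(_ le_pent) gap.
have in_range : 2 * r - 1 <= N - pent j <= N by rewrite leq_subr andbT; lia.
have /no_odd : N - pent j \in iota 0 N.+1 by rewrite mem_iota ltnS leq_subr.
by rewrite in_range.
Qed.
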